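(* Let $G$ be a bipartite graph and let $K:E(G)\to L_n$ be an edge-labeling with permutations from $L_n$. Then $(G,K)$ has no consistent vertex-labeling if and only if $G$ contains a chordless (induced) cycle $C$ such that $(C,K|_{E(C)})$ has no consistent vertex-labeling.
   Context: Labeled graphs: $G$ is a finite simple graph in which each edge is given a fixed orientation; $uv$ denotes the edge oriented from $u$ to $v$. An edge-labeling $K:E(G)\to S_n$ assigns to each edge a permutation of $[n]=\{0,\dots,n-1\}$. A vertex-labeling is a map $k:V(G)\to[n]$. An edge $uv$ with $K(uv)=\pi$ is a contradiction of $k$ if $\pi(k(u))\neq k(v)$. A vertex-labeling is consistent if it has no contradictions. $L_n=\{\pi_0,\dots,\pi_{n-1}\}\subseteq S_n$, where $\pi_i(x)\equiv i-x \pmod n$. Each $\pi_i$ is an involution, so orientation is irrelevant. *)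

From mathcomp Require Import all_boot.
Set Implicit Arguments. Unset Strict Implicit. Unset Printing Implicit Defensive.

(* The permutation pi_i of [n] = 'I_n : x |-> (i - x) mod n. *)
Definition piL (n : nat) (i x : 'I_n) : 'I_n :=
  @Ordinal n ((i + (n - x)) %% n)
    (ltn_pmod _ (leq_ltn_trans (leq0n i) (ltn_ord i))).

Definition simple_graph (T : finType) (e : rel T) : Prop :=
  (forall u, ~~ e u u) /\ (forall u v, e u v = e v u).

Definition bipartite (T : finType) (e : rel T) : Prop :=
  exists f : T -> bool, forall u v, e u v -> f u != f v.

(* An edge labeling with values in L_n: K u v is the index i of pi_i
   labelling the edge {u,v}; it is the same for both orientations. *)
Definition edge_labeling (T : finType) (e : rel T) (n : nat) (K : T -> T -> 'I_n) : Prop :=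
  forall u v, e u v -> K u v = K v u.

Definition has_consistent (T : finType) (e : rel T) (n : nat) (K : T -> T -> 'I_n) : Prop :=
  exists k : T -> 'I_n, forall u v, e u v -> piL (K u v) (k u) = k v.

Definition cyc_adj (T : eqType) (c : seq T) (u v : T) : bool :=
  (next c u == v) || (next c v == u).

Definition chordless_cycle (T : finType) (e : rel T) (c : seq T) : Prop :=
  [/\ uniq c, 3 <= size c &
      forall u v, u \in c -> v \in c -> e u v = cyc_adj c u v].

Definition cycle_consistent (T : finType) (n : nat) (K : T -> T -> 'I_n) (c : seq T) : Prop :=
  exists k : T -> 'I_n, forall u v, u \in c -> v \in c -> cyc_adj c u v ->
    piL (K u v) (k u) = k v.

From mathcomp Require Import all_boot all_algebra zify.
Set Implicit Arguments. Unset Strict Implicit. Unset Printing Implicit Defensive.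
Import GRing.Theory.

(* Since pi_i(x) = i - x, on an edge uv of a bipartite graph the condition
   pi_(K uv)(k u) = k v reads K uv = k u + k v.  Negating both the label and
   k on one side of the bipartition turns it into g(u,v) = h u - h v, where
   g is antisymmetric: (G, K) becomes a Z_n-gain graph and a consistent
   labeling is exactly a potential for g.  A potential exists iff every
   closed walk has gain 0, and a closed walk of nonzero gain can be shortened
   (at a repeated vertex, or along a chord, the gain splits as a sum over two
   shorter closed walks) until it is a chordless cycle of nonzero gain, on
   which no consistent labeling can exist. *)

Lemma last_rev_belast (T : Type) (x : T) p : last (last x p) (rev (belast x p)) = x.
Proof. by case: p => [|y p] //=; rewrite rev_cons last_rcons. Qed.

Section WalkGain.
Local Open Scope ring_scope.

Variables (T : eqType) (V : zmodType) (g : T -> T -> V).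

Fixpoint walk_gain x p := if p is y :: p' then g x y + walk_gain y p' else 0.

Definition cycle_gain c := if c is x :: p then walk_gain x (rcons p x) else 0.

Lemma walk_gain_cat x p q :
  walk_gain x (p ++ q) = walk_gain x p + walk_gain (last x p) q.
Proof. by elim: p x => [|y p IH] x /=; rewrite ?add0r // IH addrA. Qed.

Lemma walk_gain_rcons x p y :
  walk_gain x (rcons p y) = walk_gain x p + g (last x p) y.
Proof. by rewrite -cats1 walk_gain_cat /= addr0. Qed.

Lemma cycle_gain_rot i c : cycle_gain (rot i c) = cycle_gain c.
Proof.
elim: i => [|i IH]; first by rewrite rot0.
have [lt_i_c|] := ltnP i (size c); last by move=> le_c_i; rewrite !rot_oversize // ltnW.
rewrite -add1n rotD // -IH; case: (rot i c) => [|y [|z q]] //.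
by rewrite rot1_cons /= !walk_gain_rcons /= last_rcons addrC.
Qed.

Lemma cycle_gain_cat_dup y p q :
  cycle_gain (y :: p ++ y :: q) = cycle_gain (y :: p) + cycle_gain (y :: q).
Proof. by rewrite /= rcons_cat walk_gain_cat /= !walk_gain_rcons addrA. Qed.

Lemma walk_gain_potential (h : T -> V) x p :
  path [rel a b | g a b == h a - h b] x p -> walk_gain x p = h x - h (last x p).
Proof.
elim: p x => [|y p IH] x /=; first by rewrite subrr.
by move=> /andP[/eqP -> /IH ->]; rewrite addrA subrK.
Qed.

Lemma cycle_gain_potential (h : T -> V) c :
  cycle [rel a b | g a b == h a - h b] c -> cycle_gain c = 0.
Proof. by case: c => //= x p /walk_gain_potential ->; rewrite last_rcons subrr. Qed.

Variable e : rel T.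

Lemma closed_walk_cycle x p : path e x p -> last x p = x ->
  exists c, cycle e c /\ cycle_gain c = walk_gain x p.
Proof.
case/lastP: p => [|q y]; first by exists [::].
by rewrite last_rcons => pp yx; subst y; exists (x :: q).
Qed.

Hypothesis g_anti : forall u v, e u v -> g v u = - g u v.

Lemma walk_gain_rev x p :
  path e x p -> walk_gain (last x p) (rev (belast x p)) = - walk_gain x p.
Proof.
elim: p x => [|y p IH] x /=; first by rewrite oppr0.
case/andP=> exy /IH; rewrite rev_cons walk_gain_rcons last_rev_belast => ->.
by rewrite g_anti // opprD addrC.
Qed.

Lemma cycle_gain_chord u v q1 q2 : e u v ->
  cycle_gain (u :: q1 ++ v :: q2) =
  cycle_gain (u :: rcons q1 v) + cycle_gain (v :: rcons q2 u).
Proof.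
move=> euv; rewrite /= rcons_cat walk_gain_cat /= !walk_gain_rcons !last_rcons.
by rewrite (g_anti euv) addrACA addNr addr0 -!addrA.
Qed.

End WalkGain.

Lemma cycle_cat_dup (T : eqType) (e : rel T) y p q :
  cycle e (y :: p ++ y :: q) = cycle e (y :: p) && cycle e (y :: q).
Proof. by rewrite /= rcons_cat cat_path /= !rcons_path andbA. Qed.

Lemma cycle_chord (T : eqType) (e : rel T) u v q1 q2 : e u v -> e v u ->
  cycle e (u :: q1 ++ v :: q2) -> cycle e (u :: rcons q1 v) && cycle e (v :: rcons q2 u).
Proof.
move=> euv evu; rewrite /= rcons_cat cat_path /= !rcons_path !last_rcons.
by case/and3P=> -> -> /andP[-> ->]; rewrite evu euv.
Qed.

Lemma not_uniq_split (T : eqType) (c : seq T) :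
  ~~ uniq c -> exists a y b d, c = a ++ y :: b ++ y :: d.
Proof.
elim: c => [|x s IH] //=; rewrite negb_and negbK.
have [xs _ | xs /= /IH [a [y [b [d ->]]]]] := boolP (x \in s).
  by have [b d] := splitPr xs; exists [::], x, b, d.
by exists (x :: a), y, b, d.
Qed.

Lemma rot_to_pair (T : eqType) (c : seq T) u v : u \in c -> v \in c -> u != v ->
  exists i q1 q2, rot i c = u :: q1 ++ v :: q2.
Proof.
case/splitPr=> c1 c2 vc uv; exists (size c1); rewrite rot_size_cat /=.
have : v \in c2 ++ c1 by move: vc; rewrite !mem_cat inE eq_sym (negbTE uv) orbC.
by case/splitPr=> q1 q2; exists q1, q2.
Qed.

Lemma cyc_adj_edge (T : eqType) (e : rel T) c u v : symmetric e -> cycle e c ->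
  u \in c -> v \in c -> cyc_adj c u v -> e u v.
Proof.
move=> e_sym cc uc vc /orP[/eqP <- | /eqP <-]; first exact: next_cycle.
by rewrite e_sym; exact: next_cycle.
Qed.

Section UnbalancedCycles.
Local Open Scope ring_scope.

Variables (T : finType) (V : zmodType) (e : rel T) (g : T -> T -> V).
Hypothesis e_irr : irreflexive e.
Hypothesis e_sym : symmetric e.
Hypothesis g_anti : forall u v, e u v -> g v u = - g u v.

Definition unbalanced c := cycle e c && (cycle_gain g c != 0).

Lemma unbalanced_rot i c : unbalanced (rot i c) = unbalanced c.
Proof. by rewrite /unbalanced rot_cycle cycle_gain_rot. Qed.

Lemma unbalanced_size c : unbalanced c -> (2 < size c)%N.
Proof.
case: c => [|y [|z [|w q]]] //; rewrite /unbalanced /= ?e_irr ?eqxx //.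
by case/andP=> /andP[ezy _]; rewrite (g_anti ezy) addr0 subrr eqxx.
Qed.

Lemma unbalanced_not_uniq c : unbalanced c -> ~~ uniq c ->
  exists2 c', (size c' < size c)%N & unbalanced c'.
Proof.
move=> ubc /not_uniq_split [a [y [b [d ec]]]].
have rc : rot (size a) c = y :: b ++ y :: (d ++ a) by rewrite ec rot_size_cat /= -catA.
have sc : size c = (size b + size (d ++ a)).+2.
  by rewrite -(size_rot (size a)) rc /= size_cat /= addnS.
move: ubc; rewrite -(unbalanced_rot (size a)) rc /unbalanced.
rewrite cycle_cat_dup cycle_gain_cat_dup => /andP[/andP[cb cd] gc].
have [gb0|gb] := eqVneq (cycle_gain g (y :: b)) 0.
  exists (y :: d ++ a); first by rewrite sc /=; lia.
  by rewrite /unbalanced cd; rewrite gb0 add0r in gc.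
by exists (y :: b); [rewrite sc /=; lia | rewrite /unbalanced cb].
Qed.

Lemma unbalanced_chord c u v : unbalanced c -> uniq c -> u \in c -> v \in c ->
  e u v -> ~~ cyc_adj c u v -> exists2 c', (size c' < size c)%N & unbalanced c'.
Proof.
move=> ubc Uc uc vc euv; rewrite /cyc_adj negb_or => /andP[nuv nvu].
have uv : u != v by apply: contraTneq euv => ->; rewrite e_irr.
have [i [q1 [q2 rc]]] := rot_to_pair uc vc uv.
have Uc' : uniq (u :: q1 ++ v :: q2) by rewrite -rc rot_uniq.
have nxt x : next (u :: q1 ++ v :: q2) x = next c x by rewrite -rc next_rot.
have q1n : q1 != [::].
  by apply: contraNneq nuv => q10; rewrite -nxt q10 /= eqxx.
have q2n : q2 != [::].
  apply: contraNneq nvu => q20; move: Uc'; rewrite -nxt q20 => Uc'.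
  by rewrite -(next_rot (size (u :: q1)) Uc') -cat_cons rot_size_cat /= eqxx.
have sc : size c = (size q1 + size q2).+2.
  by rewrite -(size_rot i) rc /= size_cat /= addnS.
move: q1n q2n ubc; rewrite -!size_eq0 -(unbalanced_rot i) rc /unbalanced.
move=> q1n q2n /andP[cc gc].
have /andP[c1 c2] : cycle e (u :: rcons q1 v) && cycle e (v :: rcons q2 u).
  by apply: cycle_chord cc; rewrite // e_sym.
rewrite (cycle_gain_chord g_anti _ _ euv) in gc.
have [g10|g1] := eqVneq (cycle_gain g (u :: rcons q1 v)) 0.
  exists (v :: rcons q2 u).
    by rewrite sc /= size_rcons !ltnS -{1}(add0n (size q2)) ltn_add2r lt0n.
  by rewrite /unbalanced c2; rewrite g10 add0r in gc.
exists (u :: rcons q1 v); last by rewrite /unbalanced c1.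
by rewrite sc /= size_rcons !ltnS -{1}(addn0 (size q1)) ltn_add2l lt0n.
Qed.

Lemma chordless_unbalanced c : unbalanced c ->
  exists c', chordless_cycle e c' /\ unbalanced c'.
Proof.
have [N] := ubnP (size c); elim: N c => // N IH c /ltnSE szc ubc.
have recur c' : (size c' < size c)%N -> unbalanced c' ->
    exists c'', chordless_cycle e c'' /\ unbalanced c''.
  by move=> ltc; apply: IH; exact: leq_trans ltc szc.
have [Uc|nUc] := boolP (uniq c); last first.
  by have [c' ltc ubc'] := unbalanced_not_uniq ubc nUc; exact: recur ltc ubc'.
have [chordless|] :=
  boolP (all (fun u => all (fun v => e u v ==> cyc_adj c u v) c) c).
  exists c; split=> //; split=> // [|u v uc vc]; first exact: unbalanced_size.
  apply/idP/idP; first exact: (implyP (allP (allP chordless u uc) v vc)).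
  by apply: cyc_adj_edge => //; case/andP: ubc.
case/allPn=> u uc /allPn[v vc]; rewrite negb_imply => /andP[euv nadj].
have [c' ltc ubc'] := unbalanced_chord ubc Uc uc vc euv nadj.
exact: recur ltc ubc'.
Qed.

Lemma root_walk_exists v : exists p, path e v p && (last v p == fingraph.root e v).
Proof. by have /connectP[p pp lp] := connect_root e v; exists p; rewrite pp -lp eqxx. Qed.

Definition root_walk v := xchoose (root_walk_exists v).

(* When some edge uv violates [g u v = root_potential u - root_potential v],
   the walk u, v, then to the common root and back to u, is a closed walk of
   nonzero gain. *)
Definition root_potential v := walk_gain g v (root_walk v).

Lemma root_potential_edge u v : e u v ->
  exists c, cycle e c /\ cycle_gain g c = g u v - (root_potential u - root_potential v).
Proof.
move=> euv; have /andP[pu_path /eqP lu] := xchooseP (root_walk_exists u).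
have /andP[pv_path /eqP lv] := xchooseP (root_walk_exists v).
have ruv : fingraph.root e u = fingraph.root e v.
  by apply/fingraph.rootP; [exact: sym_connect_sym | exact: connect1].
set pu := root_walk u in pu_path lu *; set pv := root_walk v in pv_path lv *.
pose p := v :: pv ++ rev (belast u pu).
have p_path : path e u p.
  rewrite /p /= euv cat_path pv_path lv -ruv -lu rev_path.
  by rewrite (eq_path (e' := e)) // => x y; exact: e_sym.
have p_closed : last u p = u by rewrite /p /= last_cat lv -ruv -lu last_rev_belast.
have [c [cc gc]] := closed_walk_cycle g p_path p_closed.
exists c; split=> //; rewrite gc /p /= walk_gain_cat lv -ruv -lu.
by rewrite (walk_gain_rev g_anti pu_path) opprB.
Qed.

End UnbalancedCycles.

Lemma piLE m (i x : 'Z_m.+2) : piL i x = (i - x)%R.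
Proof. by apply: val_inj => /=; rewrite modnDmr. Qed.

Section SignedGain.
Local Open Scope ring_scope.

Variables (m : nat) (T : finType) (e : rel T) (side : T -> bool).
Variable K : T -> T -> 'Z_m.+2.
Hypothesis side_bip : forall u v, e u v -> side u != side v.
Hypothesis K_sym : forall u v, e u v -> K u v = K v u.

Definition signed (k : T -> 'Z_m.+2) u := if side u then k u else - k u.

Definition signed_gain u v := signed (K^~ v) u.

Lemma signedK k u : signed (signed k) u = k u.
Proof. by rewrite /signed; case: (side u); rewrite ?opprK. Qed.

Lemma signed_gain_anti u v : e u v -> signed_gain v u = - signed_gain u v.
Proof.
move=> euv; have := side_bip euv; rewrite /signed_gain /signed (K_sym euv).
by case: (side u); case: (side v); rewrite ?opprK.
Qed.

Lemma consistent_edgeE k u v : e u v ->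
  (piL (K u v) (k u) == k v) = (signed_gain u v == signed k u - signed k v).
Proof.
move=> euv; have := side_bip euv; rewrite piLE /signed_gain /signed.
case: (side u); case: (side v) => // _.
  by rewrite opprK subr_eq addrC.
by rewrite -opprD eqr_opp subr_eq addrC.
Qed.

Lemma consistent_of_potential h :
  (forall u v, e u v -> signed_gain u v = h u - h v) -> has_consistent e K.
Proof.
move=> hpot; exists (signed h) => u v euv; apply/eqP.
by rewrite consistent_edgeE // !signedK hpot.
Qed.

Lemma chordless_consistent_gain c : chordless_cycle e c -> cycle_consistent K c ->
  cycle_gain signed_gain c = 0.
Proof.
case=> Uc _ chordless [k kc]; apply: (cycle_gain_potential (h := signed k)).
apply: (sub_in_cycle _ (allss c) (cycle_next Uc)) => x y xc yc /= /eqP nx.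
have adj : cyc_adj c x y by rewrite /cyc_adj nx eqxx.
by rewrite -consistent_edgeE ?chordless // kc.
Qed.

End SignedGain.

Theorem theorem9 (T : finType) (e : rel T) (n : nat) (K : T -> T -> 'I_n) :
  0 < n -> simple_graph e -> bipartite e -> edge_labeling e K ->
  (~ has_consistent e K <->
   exists c : seq T, chordless_cycle e c /\ ~ cycle_consistent K c).
Proof.
move=> n_gt0 [e_irr e_sym] [side side_bip] K_sym; split; last first.
  case=> c [[_ _ chordless] not_cons] [k kc]; apply: not_cons.
  by exists k => u v uc vc adj; apply: kc; rewrite chordless.
case: n K n_gt0 K_sym => [//|[|m]] K _ K_sym no_cons.
  by case: no_cons; exists (fun _ => ord0) => u v _; rewrite (ord1 (piL _ _)).
pose g := signed_gain side K; pose h := root_potential e g.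
have g_anti := signed_gain_anti side_bip K_sym.
have [pot|] := boolP [forall u, forall v, e u v ==> (g u v == h u - h v)%R].
  case: no_cons; apply: (consistent_of_potential side_bip (h := h)) => u v euv.
  exact/eqP/(implyP (forallP (forallP pot u) v)).
case/forallPn=> u /forallPn[v]; rewrite negb_imply => /andP[euv not_pot].
have [c [cc gc]] := root_potential_edge e_sym g_anti euv.
have ubc : unbalanced e g c by rewrite /unbalanced cc gc subr_eq0.
have [c' [chordless /andP[_ ubc']]] :=
  chordless_unbalanced (fun x => negbTE (e_irr x)) e_sym g_anti ubc.
exists c'; split=> // cons.
by rewrite (chordless_consistent_gain side_bip chordless cons) eqxx in ubc'.
Qed.
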